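(* Let $p$ be a prime, let $t$ be a positive integer with $t\mid(p-1)$, let $Q\in\mathbb{F}_p[x,y]$, and let $$P(x,y)=f_n(x)y^n+\dots+f_1(x)y+f_0(x)\in\mathbb{F}_p[x,y]$$ be an irreducible polynomial of bidegree $(m,n)$ with $n\geqslant 1$ (so $f_n\neq 0$, $\deg f_i\leqslant m$). If $P(x,y)$ divides $Q(x,y^t)$ in $\mathbb{F}_p[x,y]$, then $P(x,0)^{\lfloor t/n\rfloor}$ divides $Q(x,0)$ in $\mathbb{F}_p[x]$.
   Context: $\lfloor s\rfloor$ denotes the integer part of a real number $s$. *)

(* Bivariate polynomials over a ring R are represented as
   {poly {poly R}}: the outer variable is y, coefficients are polynomials in x. *)
From HB Require Import structures.
From mathcomp Require Import all_boot all_order all_algebra.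
Set Implicit Arguments. Unset Strict Implicit. Unset Printing Implicit Defensive.
Import GRing.Theory.
Local Open Scope ring_scope.

Definition dvd2 (F : fieldType) (P Q : {poly {poly F}}) : Prop :=
  exists C : {poly {poly F}}, Q = P * C.

Definition irreducible2 (F : fieldType) (P : {poly {poly F}}) : Prop :=
  [/\ P != 0, P \isn't a GRing.unit &
      forall A B : {poly {poly F}}, P = A * B ->
        A \is a GRing.unit \/ B \is a GRing.unit].

(* Since t divides p - 1, F_p contains a primitive t-th root of unity z, and
   y |-> z^k y fixes Q(x, y^t); hence every P_k(x, y) = P(x, z^k y) divides
   Q(x, y^t).  By Gauss's lemma (on contents in F_p[x], and via resultants in
   F_p[x][y]) the irreducible P of positive y-degree is prime, and so is each
   P_k.  When P(x, 0) <> 0, comparing the coefficients of y^0 and y^n shows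
   that P_j does not divide P_k for k < j < t/n, because z^(jn) <> z^(kn).
   So P_0 ... P_(t/n - 1) divides Q(x, y^t), and y = 0 gives the claim. *)

From HB Require Import structures.
From mathcomp Require Import all_boot all_order all_algebra all_solvable all_field.
From mathcomp Require Import zify ring.
From Stdlib Require Import Classical.
Set Implicit Arguments. Unset Strict Implicit. Unset Printing Implicit Defensive.
Import GRing.Theory.
Local Open Scope ring_scope.

Lemma finField_prim_root (F : finFieldType) (t : nat) :
  (t %| #|F|.-1)%N -> exists z : F, t.-primitive_root z.
Proof.
move=> t_dvd.
have card_gt1 : (1 < #|F|)%N by rewrite (cardD1 0) (cardD1 1) !inE oner_neq0.
have : has (#|F|.-1).-primitive_root [seq x <- enum F | x != 0].
  apply: has_prim_root; first by rewrite -subn1 subn_gt0.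
  - apply/allP=> x; rewrite mem_filter => /andP[x_neq0 _].
    rewrite unity_rootE; apply/eqP/(mulIf x_neq0).
    by rewrite -exprSr prednK ?expf_card ?mul1r // ltnW.
  - by rewrite filter_uniq // enum_uniq.
  - rewrite size_filter -(cardC1 (0 : F)) cardE /enum_mem size_filter.
    by rewrite filter_predT.
by case/hasP=> g _ g_prim; exists (g ^+ (#|F|.-1 %/ t)); exact: dvdn_prim_root.
Qed.

Section GaussLemma.

Variable F : fieldType.
Implicit Types (a b c d q : {poly F}) (A B C D E G P X Y Z : {poly {poly F}}).

Lemma polyF_unitE c : (c \is a GRing.unit) = (size c == 1%N).
Proof.
rewrite poly_unitE unitfE; have [c_size|] := eqVneq (size c) 1%N; last by [].
have -> : c`_0 = lead_coef c by rewrite lead_coefE c_size.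
by rewrite lead_coef_eq0 -size_poly_eq0 c_size.
Qed.

Lemma irredp_dvdM q a b :
  irreducible_poly q -> q %| a * b -> (q %| a) || (q %| b).
Proof.
move=> q_irr; have [//|qNa] := boolP (q %| a).
by rewrite Gauss_dvdpr // irreducible_poly_coprime.
Qed.

Lemma irredp_dvd_exists c : (1 < size c)%N -> exists2 q, irreducible_poly q & q %| c.
Proof.
elim: {c}(size c) {-2}c (leqnn (size c)) => [|N IH] c size_c c_size_gt1.
  by move: (leq_trans c_size_gt1 size_c).
have [c_irr|c_red] := classic (irreducible_poly c); first by exists c.
have [d [d_size d_dvd d_neqp]] : exists d, [/\ size d != 1%N, d %| c & ~~ (d %= c)].
  apply: NNPP => no_d; apply: c_red; split => // d d_size d_dvd.
  by apply/negPn/negP => d_neqp; apply: no_d; exists d.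
have c_neq0 : c != 0 by rewrite -size_poly_eq0 -lt0n ltnW.
have d_neq0 : d != 0 by apply: contraTneq d_dvd => ->; rewrite dvd0p.
have d_lt_c : (size d < size c)%N by rewrite ltn_neqAle dvdp_leq // andbT dvdp_size_eqp.
have [||q q_irr q_dvd] := IH d; first by rewrite -ltnS (leq_trans d_lt_c).
  by rewrite ltn_neqAle eq_sym d_size lt0n size_poly_eq0.
by exists q => //; apply: dvdp_trans d_dvd.
Qed.

Definition coefs_dvdp c A := forall i, c %| A`_i.

Lemma coefs_dvdp_polyCM c d A : c %| d -> coefs_dvdp c (d%:P * A).
Proof. by move=> c_dvd i; rewrite coefCM dvdp_mulr. Qed.

Lemma coefs_dvdpP c A : coefs_dvdp c A -> exists A', A = c%:P * A'.
Proof.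
move=> c_dvd; exists (map_poly (fun u => u %/ c) A).
by apply/polyP=> i; rewrite coefCM coef_map_id0 ?div0p // divpKC.
Qed.

Lemma drop_poly1E A : A = drop_poly 1 A * 'X + (A`_0)%:P.
Proof.
apply/polyP=> i; rewrite coefD coefMX coefC coef_drop_poly.
by case: i => [|i] /=; rewrite ?add0r ?addr0 // addn1.
Qed.

Lemma coefs_dvdp_drop1M q A B :
  q %| A`_0 -> coefs_dvdp q (A * B) -> coefs_dvdp q (drop_poly 1 A * B).
Proof.
move=> q_dvd0 q_dvdAB i; have := q_dvdAB i.+1.
rewrite {1}(drop_poly1E A) mulrDl coefD -mulrA (mulrC 'X) mulrA coefMX coefCM /=.
by rewrite dvdp_addl // dvdp_mulr.
Qed.

Lemma coefs_dvdp_drop1 q A :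
  q %| A`_0 -> coefs_dvdp q (drop_poly 1 A) -> coefs_dvdp q A.
Proof.
move=> q_dvd0 q_dvd [|i]; first by [].
by rewrite (drop_poly1E A) coefD coefMX coefC addr0.
Qed.

(* Peel off the constant terms of A and B while q divides them; by primality
   of q it divides one of the two. *)
Lemma irredp_coefs_dvdpM q A B : irreducible_poly q ->
  coefs_dvdp q (A * B) -> coefs_dvdp q A \/ coefs_dvdp q B.
Proof.
move=> q_irr.
elim: {A B}(size A + size B)%N {-2}A {-2}B (leqnn (size A + size B)%N) => [|N IH] A B.
  rewrite leqn0 addn_eq0 size_poly_eq0 => /andP[/eqP -> _] _.
  by left=> i; rewrite coef0 dvdp0.
have peel A' B' : (size A' + size B' <= N.+1)%N -> coefs_dvdp q (A' * B') ->
    q %| A'`_0 -> coefs_dvdp q A' \/ coefs_dvdp q B'.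
  move=> size_AB q_dvdAB q_dvd0.
  have [->|A'_neq0] := eqVneq A' 0; first by left=> i; rewrite coef0 dvdp0.
  have size_drop : (size (drop_poly 1 A') + size B' <= N)%N.
    rewrite size_drop_poly; have : (0 < size A')%N by rewrite lt0n size_poly_eq0.
    lia.
  have [q_dvd|] := IH _ _ size_drop (coefs_dvdp_drop1M q_dvd0 q_dvdAB); last by right.
  by left; apply: coefs_dvdp_drop1.
move=> size_AB q_dvdAB; have := q_dvdAB 0%N.
rewrite coef0M => /(irredp_dvdM q_irr) /orP[q_dvdA0|q_dvdB0]; first exact: peel.
rewrite mulrC addnC in q_dvdAB size_AB.
by have [|] := peel _ _ size_AB q_dvdAB q_dvdB0; [right|left].
Qed.

Lemma polyCM_split c X Y Z : c != 0 -> c%:P * X = Y * Z ->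
  exists a b Y' Z', [/\ Y = a%:P * Y', Z = b%:P * Z', X = Y' * Z' & a * b = c].
Proof.
elim: {c}(size c) {-2}c (leqnn (size c)) X Y Z => [|N IH] c size_c X Y Z c_neq0 eXYZ.
  by move: size_c; rewrite leqn0 size_poly_eq0 (negPf c_neq0).
have [c_size_le1|c_size_gt1] := leqP (size c) 1%N.
  have c_unit : c \is a GRing.unit.
    by rewrite polyF_unitE eqn_leq c_size_le1 lt0n size_poly_eq0.
  exists c, 1, (c^-1%:P * Y), Z; split; rewrite ?polyC1 ?mul1r ?mulr1 //.
    by rewrite mulrA -polyCM divrr // polyC1 mul1r.
  by rewrite -mulrA -eXYZ mulrA -polyCM mulVr // polyC1 mul1r.
have [q q_irr /dvdpP[c' ec]] := irredp_dvd_exists c_size_gt1.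
have q_neq0 := irredp_neq0 q_irr.
have c'_neq0 : c' != 0 by apply: contraNneq c_neq0 => c'0; rewrite ec c'0 mul0r.
have size_c' : (size c' <= N)%N.
  have : (0 < size c')%N by rewrite lt0n size_poly_eq0.
  move: size_c (q_irr.1); rewrite ec size_mul // -subn1; set a := size c'; lia.
have qP_neq0 : q%:P != 0 :> {poly {poly F}} by rewrite polyC_eq0.
have cancel_q X' Y' Z' : q%:P * (c'%:P * X') = Y' * (q%:P * Z') -> c'%:P * X' = Y' * Z'.
  by move=> e; apply: (mulfI qP_neq0); rewrite e mulrCA.
have q_dvdYZ : coefs_dvdp q (Y * Z).
  by rewrite -eXYZ ec; apply/coefs_dvdp_polyCM/dvdp_mull/dvdpp.
have [] := irredp_coefs_dvdpM q_irr q_dvdYZ => /coefs_dvdpP[W eW].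
  have eXWZ : c'%:P * X = W * Z.
    by apply: cancel_q; rewrite mulrA -polyCM (mulrC q) -ec eXYZ eW mulrAC mulrC.
  have [a [b [Y' [Z' [eW' eZ eX eab]]]]] := IH c' size_c' X W Z c'_neq0 eXWZ.
  exists (q * a), b, Y', Z'; split => //; first by rewrite eW eW' mulrA polyCM.
  by rewrite -mulrA eab ec mulrC.
have eXYW : c'%:P * X = Y * W.
  by apply: cancel_q; rewrite mulrA -polyCM (mulrC q) -ec eXYZ eW.
have [a [b [Y' [Z' [eY eW' eX eab]]]]] := IH c' size_c' X Y W c'_neq0 eXYW.
exists a, (q * b), Y', Z'; split => //; first by rewrite eW eW' mulrA polyCM.
by rewrite mulrCA eab ec mulrC.
Qed.

Lemma irreducible2_coefs_dvdp P c :
  irreducible2 P -> (1 < size P)%N -> coefs_dvdp c P -> c \is a GRing.unit.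
Proof.
move=> [_ _ P_irr] P_size /coefs_dvdpP[P' eP].
have [|] := P_irr _ _ eP; rewrite poly_unitE; first by rewrite coefC => /andP[].
case/andP=> /eqP P'_size _; move: P_size; rewrite eP mul_polyC.
by move/leq_trans/(_ (size_scale_leq _ _)); rewrite P'_size.
Qed.

Lemma irreducible2_dvd_polyCM P D C d : irreducible2 P -> (1 < size P)%N ->
  d != 0 -> P * D = d%:P * C -> dvd2 P C.
Proof.
move=> P_irr P_size d_neq0 ePD.
have [a [b [P' [D' [eP _ eC _]]]]] := polyCM_split d_neq0 (esym ePD).
have a_unit : a \is a GRing.unit.
  by apply: (irreducible2_coefs_dvdp P_irr P_size); rewrite eP; apply/coefs_dvdp_polyCM.
exists (a^-1%:P * D').
by rewrite eC eP mulrACA -polyCM divrr // polyC1 mul1r.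
Qed.

Lemma irreducible2_common_factor P c Y G : irreducible2 P -> c != 0 ->
  c%:P * P = Y * G -> (1 < size G)%N -> exists k, G = k%:P * P.
Proof.
move=> P_irr c_neq0 ePYG G_size.
have [a [b [Y' [G' [_ eG eP _]]]]] := polyCM_split c_neq0 ePYG.
have [_ _ /(_ _ _ eP)[]] := P_irr; rewrite poly_unitE => /andP[/eqP U_size U0_unit].
  set y := Y'`_0 in U0_unit *; exists (b * y^-1).
  rewrite eG eP (size1_polyC (eq_leq U_size)) -/y polyCM -mulrA.
  by rewrite (mulrA y^-1%:P) -polyCM mulVr // polyC1 mul1r.
move: G_size; rewrite eG mul_polyC.
by move/leq_trans/(_ (size_scale_leq _ _)); rewrite U_size.
Qed.

Definition prime2 P := ~ dvd2 P 1 /\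
  forall B C, dvd2 P (B * C) -> dvd2 P B \/ dvd2 P C.

Lemma irreducible2_prime2 P : irreducible2 P -> (1 < size P)%N -> prime2 P.
Proof.
move=> P_irr P_size; have [_ P_nunit _] := P_irr; split.
  by case=> C eC; apply: (negP P_nunit); apply/unitrPr; exists C.
move=> B C [E eBC].
have [B_size|B_size] := leqP (size B) 1%N.
  rewrite (size1_polyC B_size) in eBC *.
  have [->|b_neq0] := eqVneq B`_0 0; first by left; exists 0; rewrite mulr0.
  by right; apply: (irreducible2_dvd_polyCM P_irr P_size b_neq0 (esym eBC)).
have [[u v] /= _ eres] := resultant_in_ideal P_size B_size.
have [res_eq0|res_neq0] := eqVneq (resultant P B) 0; last first.
  right; apply: (irreducible2_dvd_polyCM (D := u * C + v * E) P_irr P_size res_neq0).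
  by rewrite eres mulrDl mulrDr -(mulrA v) eBC; ring.
move: res_eq0 => /eqP; rewrite resultant_eq0 => gcd_size.
have [[c1 Y] /= c1_neq0] := Pdiv.WeakIdomain.dvdpP _ _ (dvdp_gcdl P B).
have [[c2 Z] /= c2_neq0] := Pdiv.WeakIdomain.dvdpP _ _ (dvdp_gcdr P B).
rewrite -!mul_polyC => eB eP.
have [k eG] := irreducible2_common_factor P_irr c1_neq0 eP gcd_size.
left; apply: (irreducible2_dvd_polyCM (D := Z * k%:P) P_irr P_size c2_neq0).
by rewrite eB eG mulrC -mulrA.
Qed.

Lemma prime2_dvd2_prod P N (Ps : nat -> {poly {poly F}}) : prime2 P ->
  dvd2 P (\prod_(k < N) Ps k) -> exists2 k, (k < N)%N & dvd2 P (Ps k).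
Proof.
move=> [P_nunit P_prime]; elim: N => [|N IH]; first by rewrite big_ord0 => /P_nunit.
rewrite big_ord_recr /= => /P_prime[/IH[k k_lt P_dvd]|P_dvd].
  by exists k => //; apply: ltnW.
by exists N.
Qed.

Lemma prime2_prod_dvd2 N (Ps : nat -> {poly {poly F}}) H :
  (forall k, (k < N)%N -> prime2 (Ps k)) ->
  (forall k, (k < N)%N -> dvd2 (Ps k) H) ->
  (forall j k, (k < j < N)%N -> ~ dvd2 (Ps j) (Ps k)) ->
  dvd2 (\prod_(k < N) Ps k) H.
Proof.
elim: N => [|N IH] Ps_prime Ps_dvd Ps_coprime.
  by exists H; rewrite big_ord0 mul1r.
have [C eC] : dvd2 (\prod_(k < N) Ps k) H.
  apply: IH => [k k_lt|k k_lt|j k /andP[kj j_lt]].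
  - exact/Ps_prime/ltnW.
  - exact/Ps_dvd/ltnW.
  - by apply: Ps_coprime; rewrite kj ltnW.
have PN_prime := Ps_prime N (ltnSn N).
have [E eE] := Ps_dvd N (ltnSn N).
have : dvd2 (Ps N) ((\prod_(k < N) Ps k) * C) by exists E; rewrite -eC.
case/PN_prime.2 => [/(prime2_dvd2_prod PN_prime)[k k_lt]|[C' eC']].
  by move/(Ps_coprime N k)=> []; rewrite k_lt ltnSn.
by exists C'; rewrite big_ord_recr /= eC eC' mulrA.
Qed.

End GaussLemma.

Lemma horner0_comp_Xn (R : comNzRingType) (Q : {poly R}) t :
  (0 < t)%N -> (Q \Po 'X^t).[0] = Q.[0].
Proof. by move=> t_gt0; rewrite !horner_coef0 coef_comp_poly_Xn // dvdn0 div0n. Qed.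

Section ScaleY.

Variable F : fieldType.
Implicit Types (z : F) (A B C P X : {poly {poly F}}).

Definition scaleY z A := A \Po (z%:P *: 'X).

Lemma coef_scaleY z A i : (scaleY z A)`_i = (z ^+ i)%:P * A`_i.
Proof.
elim/poly_ind: A i => [|A c IH] i; first by rewrite /scaleY comp_poly0 !coef0 mulr0.
rewrite /scaleY comp_poly_MXaddC coefD -scalerAr coefZ coefMX coefD coefMX coefC.
case: i => [|i] /=; first by rewrite mulr0 !add0r expr0 polyC1 mul1r.
by rewrite !addr0 IH mulrA -polyCM -exprS.
Qed.

Lemma scaleYM z A B : scaleY z (A * B) = scaleY z A * scaleY z B.
Proof. exact: comp_polyM. Qed.

Lemma scaleYK z : z != 0 -> cancel (scaleY z) (scaleY z^-1).
Proof.
move=> z_neq0 A; apply/polyP=> i.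
by rewrite !coef_scaleY mulrA -polyCM -exprMn mulVf // expr1n polyC1 mul1r.
Qed.

Lemma scaleYKV z : z != 0 -> cancel (scaleY z^-1) (scaleY z).
Proof. by move=> z_neq0; rewrite -{2}[z]invrK; apply/scaleYK/invr_neq0. Qed.

Lemma horner0_scaleY z A : (scaleY z A).[0] = A.[0].
Proof. by rewrite !horner_coef0 coef_scaleY expr0 polyC1 mul1r. Qed.

Lemma size_scaleY_leq z A : (size (scaleY z A) <= size A)%N.
Proof. by apply/leq_sizeP => i /(nth_default 0) A_i; rewrite coef_scaleY A_i mulr0. Qed.

Lemma size_scaleY z A : z != 0 -> size (scaleY z A) = size A.
Proof.
move=> z_neq0; apply/eqP; rewrite eqn_leq size_scaleY_leq /=.
by rewrite -{1}(scaleYK z_neq0 A) size_scaleY_leq.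
Qed.

Lemma scaleY_comp_Xn z t A : (0 < t)%N -> z ^+ t = 1 ->
  scaleY z (A \Po 'X^t) = A \Po 'X^t.
Proof.
move=> t_gt0 zt; apply/polyP=> i; rewrite coef_scaleY coef_comp_poly_Xn //.
case: dvdnP => [[k ->]|_]; last by rewrite mulr0.
by rewrite mulnC exprM zt expr1n polyC1 mul1r.
Qed.

Lemma dvd2_scaleY z P X : dvd2 P X -> dvd2 (scaleY z P) (scaleY z X).
Proof. by case=> C ->; exists (scaleY z C); rewrite scaleYM. Qed.

Lemma prime2_scaleY z P : z != 0 -> prime2 P -> prime2 (scaleY z P).
Proof.
move=> z_neq0 [P_nunit P_prime].
have dvd2_unscale X : dvd2 (scaleY z P) X -> dvd2 P (scaleY z^-1 X).
  by move/(dvd2_scaleY z^-1); rewrite scaleYK.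
split=> [/dvd2_unscale|B C /dvd2_unscale]; first by rewrite /scaleY comp_polyC => /P_nunit.
rewrite scaleYM => /P_prime[] /(dvd2_scaleY z); rewrite scaleYKV //; by [left|right].
Qed.

(* Comparing the constant and leading coefficients: the cofactor is forced to be 1. *)
Lemma scaleY_dvd2_expr P n a b : size P = n.+1 -> P`_0 != 0 -> a != 0 ->
  dvd2 (scaleY a P) (scaleY b P) -> a ^+ n = b ^+ n.
Proof.
move=> P_size P0_neq0 a_neq0 [E eE].
have Pn_neq0 : P`_n != 0.
  by rewrite -[n]/(n.+1.-1) -P_size -lead_coefE lead_coef_eq0 -size_poly_eq0 P_size.
have E_neq0 : E != 0.
  apply: contra_eq_neq (congr1 (fun A => A`_0) eE) => ->.
  by rewrite mulr0 coef0 coef_scaleY expr0 polyC1 mul1r.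
have E_size : size E = 1%N.
  have aP_neq0 : scaleY a P != 0 by rewrite -size_poly_eq0 size_scaleY // P_size.
  have := size_scaleY_leq b P; rewrite eE size_mul // size_scaleY // P_size.
  by move: E_neq0; rewrite -size_poly_eq0; case: (size E) => [|[|]] //; lia.
move: eE; rewrite (size1_polyC (eq_leq E_size)); set e := E`_0 => eE.
have e1 : e = 1.
  move: (congr1 (fun A => A`_0) eE); rewrite coefMC !coef_scaleY expr0 polyC1 !mul1r.
  by move/esym; rewrite -{2}[P`_0]mulr1 => /(mulfI P0_neq0).
move: (congr1 (fun A => A`_n) eE); rewrite coefMC !coef_scaleY e1 mulr1.
by move/esym/(mulIf Pn_neq0)/polyC_inj.
Qed.

End ScaleY.

Theorem lemma2 (p : nat) (Hp : prime p) (t m n : nat)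
  (Ht : (0 < t)%N) (Htp : (t %| p.-1)%N)
  (Q P : {poly {poly 'F_p}})
  (Hirr : irreducible2 P)
  (Hn : (1 <= n)%N) (HsizeP : size P = n.+1)
  (Hm : forall i : nat, (size (P`_i)%R <= m.+1)%N)
  (Hdvd : dvd2 P (Q \Po 'X^t)) :
  (P.[0] ^+ (t %/ n)%N %| Q.[0])%R.
Proof.
rewrite -(horner0_comp_Xn Q Ht).
have [P0_eq0|P0_neq0] := eqVneq P`_0 0.
  case: (t %/ n)%N => [|?]; first by rewrite expr0 dvd1p.
  by case: Hdvd => C ->; rewrite hornerM horner_coef0 P0_eq0 !mul0r.
have [z z_prim] : exists z : 'F_p, t.-primitive_root z.
  by apply: finField_prim_root; rewrite ?card_Fp.
have z_neq0 : z != 0 by rewrite (prim_root_eq0 z_prim) -lt0n.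
have P_prime : prime2 P by apply: irreducible2_prime2; rewrite ?HsizeP.
have lt_t j : (j < t %/ n)%N -> (j * n < t)%N by rewrite leq_divRL // mulSn; lia.
pose Ps k := scaleY (z ^+ k) P.
have [D ->] : dvd2 (\prod_(k < t %/ n) Ps k) (Q \Po 'X^t).
  apply: prime2_prod_dvd2 => [k _|k _|j k /andP[k_lt_j j_lt]].
  - exact: prime2_scaleY (expf_neq0 _ z_neq0) P_prime.
  - have zk_t : (z ^+ k) ^+ t = 1 by rewrite exprAC (prim_expr_order z_prim) expr1n.
    by rewrite -(scaleY_comp_Xn Q Ht zk_t); apply: dvd2_scaleY.
  - move/(scaleY_dvd2_expr HsizeP P0_neq0 (expf_neq0 _ z_neq0))/eqP.
    rewrite -!exprM (eq_prim_root_expr z_prim) !modn_small ?lt_t //.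
      by rewrite eqn_mul2r eqn0Ngt Hn (gtn_eqF k_lt_j).
    exact: ltn_trans j_lt.
rewrite hornerM horner_prod; under eq_bigr do rewrite horner0_scaleY.
by rewrite prodr_const card_ord dvdp_mulr.
Qed.
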